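(* Let $\Phi=\{\varphi_i\}_{i\in\Lambda}$ be a similarity IFS in $\mathbb{R}^d$ and let $F\subset\mathbb{R}^d$ be a nonempty compact set with $\varphi_iF\subseteq F$ for every $i\in\Lambda$. Then $\Phi$ is $(F,c)$-diffuse for some $c>0$ if and only if for every affine hyperplane $\mathcal{L}\subseteq\mathbb{R}^d$ there exists $i\in\Lambda$ with $\varphi_iF\cap\mathcal{L}=\emptyset$.
   Context: A similarity IFS is a finite family of contracting similarities of $\mathbb{R}^d$. $\Phi$ is $(F,c)$-diffuse if for every affine hyperplane $\mathcal{L}$ there is $i\in\Lambda$ with $\varphi_iF\cap\mathcal{L}^{(c)}=\emptyset$, $\mathcal{L}^{(c)}$ denoting the open $c$-neighborhood of $\mathcal{L}$. *)

From mathcomp Require Import all_boot all_order all_algebra.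
From mathcomp Require Import all_classical all_reals all_analysis.
Set Implicit Arguments. Unset Strict Implicit. Unset Printing Implicit Defensive.
Import Order.TTheory GRing.Theory Num.Theory.
Local Open Scope ring_scope.
Local Open Scope classical_set_scope.

Definition edist {R : realType} {d : nat} (x y : 'rV[R]_d) : R :=
  Num.sqrt (\sum_(i < d) (x 0 i - y 0 i) ^+ 2).

Definition contracting_similarity {R : realType} {d : nat}
  (f : 'rV[R]_d -> 'rV[R]_d) : Prop :=
  exists r : R, 0 < r < 1 /\ forall x y, edist (f x) (f y) = r * edist x y.

Definition affine_hyperplane {R : realType} {d : nat} (L : set 'rV[R]_d) : Prop :=
  exists (a : 'rV[R]_d) (b : R), a != 0 /\
    L = [set x | \sum_(i < d) a 0 i * x 0 i = b].

Definition open_nbhd {R : realType} {d : nat} (L : set 'rV[R]_d) (c : R)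
  : set 'rV[R]_d :=
  [set x | exists2 y, L y & edist x y < c].

Definition diffuse {R : realType} {d : nat} {I : finType}
  (phi : I -> 'rV[R]_d -> 'rV[R]_d) (F : set 'rV[R]_d) (c : R) : Prop :=
  forall L : set 'rV[R]_d, affine_hyperplane L ->
    exists i : I, (phi i @` F) `&` open_nbhd L c = set0.

(* Write hyperplanes as [dot a y = b] with [|a| = 1] (max norm). If [phi i F] misses such a
   hyperplane then, [phi i F] being compact, [|dot a y - b|] stays above some margin [e > 0]
   on it, and as [F] is bounded the margin [e / 2] persists for all nearby parameters
   [(a', b')]. Compactness of the parameters with [|b| <= B] gives one margin for all of
   them, while for [|b| > B] the hyperplane is far from [F] anyway. A uniform margin [e]
   gives diffuseness with [c = e / (d + 1)], since [|dot a (y - z)| <= d * edist y z]. *)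

From Pilot Require Import Defs.
From mathcomp Require Import all_boot all_order all_algebra.
From mathcomp Require Import all_classical all_reals all_analysis.
From mathcomp Require Import lra ring.
Import Order.TTheory GRing.Theory Num.Theory.
Import numFieldNormedType.Exports.
Local Open Scope ring_scope.
Local Open Scope classical_set_scope.
(* MathComp-Analysis also defines an [edist] (the extended distance). *)
Local Notation edist := Defs.edist.

Section Euclidean.
Context {R : realType} {d : nat}.
Implicit Types (a x y : 'rV[R]_d).

Definition dot a x : R := \sum_(j < d) a 0 j * x 0 j.

Lemma dotBr a x y : dot a (x - y) = dot a x - dot a y.
Proof. by rewrite /dot -sumrB; apply: eq_bigr => j _; rewrite !mxE mulrBr. Qed.

Lemma dotBl a a' x : dot (a - a') x = dot a x - dot a' x.
Proof. by rewrite /dot -sumrB; apply: eq_bigr => j _; rewrite !mxE mulrBl. Qed.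

Lemma dotZl k a x : dot (k *: a) x = k * dot a x.
Proof. by rewrite /dot mulr_sumr; apply: eq_bigr => j _; rewrite !mxE mulrA. Qed.

Lemma mxentry_le_norm x j : `|x 0 j| <= `|x|.
Proof.
by rewrite [leRHS]/Num.Def.normr /= mx_normrE; apply/bigmax_geP; right; exists (0, j).
Qed.

Lemma norm_dot_le a x : `|dot a x| <= d%:R * (`|a| * `|x|).
Proof.
rewrite mulr_natl -[d in _ *+ d]card_ord -sumr_const.
apply: le_trans (ler_norm_sum _ _ _) _.
by apply: ler_sum => j _; rewrite normrM ler_pM ?mxentry_le_norm.
Qed.

Lemma edistxx x : edist x x = 0.
Proof. by rewrite /edist big1 ?sqrtr0 // => j _; rewrite subrr expr0n. Qed.

Lemma mxentryB_le_edist x y j : `|x 0 j - y 0 j| <= edist x y.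
Proof.
rewrite /edist -sqrtr_sqr; apply: ler_wsqrtr.
by rewrite (bigD1 j) //= lerDl sumr_ge0 // => k _; rewrite sqr_ge0.
Qed.

Lemma normB_le_edist x y : `|x - y| <= edist x y.
Proof.
rewrite [leLHS]/Num.Def.normr /= mx_normrE; apply: bigmax_le => [|[i j] _].
  exact: sqrtr_ge0.
by rewrite ord1 !mxE mxentryB_le_edist.
Qed.

Lemma edist_le_normB x y : edist x y <= d%:R * `|x - y|.
Proof.
rewrite /edist -(ger0_norm (_ : 0 <= d%:R * `|x - y|)) ?mulr_ge0 //.
rewrite -sqrtr_sqr; apply: ler_wsqrtr.
apply: (@le_trans _ _ (\sum_(j < d) `|x - y| ^+ 2)).
  apply: ler_sum => j _; rewrite -real_normK ?num_real // lerXn2r ?nnegrE //.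
  by have := mxentry_le_norm (x - y) j; rewrite !mxE.
rewrite sumr_const card_ord -[leLHS]mulr_natr exprMn [leRHS]mulrC.
rewrite ler_wpM2l ?sqr_ge0 // -natrX ler_nat.
by case: (d) => // n; rewrite leq_pmulr.
Qed.

End Euclidean.

Lemma lipschitz_continuous (R : realFieldType) (V W : normedModType R) (f : V -> W) (C : R) :
  (forall x y, `|f x - f y| <= C * `|x - y|) -> continuous f.
Proof.
move=> fC x; apply/cvgrPdist_lt => e e0.
have C1 : 0 < `|C| + 1 by rewrite ltr_pwDr.
near=> y.
have xy : `|x - y| * (`|C| + 1) < e.
  by rewrite -ltr_pdivlMr //; near: y; apply: cvgr_dist_lt => //; exact: divr_gt0.
apply: le_lt_trans (fC x y) (le_lt_trans _ xy).
by rewrite mulrC ler_wpM2l // (le_trans (ler_norm C)) ?lerDl.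
Unshelve. all: by end_near.
Qed.

Lemma compact_uniform_margin (R : numFieldType) (T : topologicalType)
    (K : set T) (Q : R -> T -> Prop) :
  compact K -> (forall e e' x, 0 < e' <= e -> Q e x -> Q e' x) ->
  (forall x, K x -> exists2 e, 0 < e & \forall y \near x, Q e y) ->
  exists2 e, 0 < e & forall x, K x -> Q e x.
Proof.
move=> /compact_near_coveringP cK Qmono Qloc.
have KQ : \forall e \near 0^'+, K `<=` Q e.
  apply: cK => x Kx; have [e e0 Qe] := Qloc x Kx.
  exists ([set y | Q e y], [set e' | 0 < e' <= e]); first split => //=.
    near=> e'; apply/andP; split; near: e'; [exact: nbhs_right_gt|exact: nbhs_right_le].
  by move=> [y e'] /= [Qy e'e]; apply: Qmono Qy.
by have [e [/= e0 KQe]] := filter_ex (filterI (nbhs_right_gt 0) KQ); exists e.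
Unshelve. all: by end_near.
Qed.

Lemma compact_normr_le {R : realType} {V : normedModType R} {A : set V} :
  compact A -> exists M, forall x, A x -> `|x| <= M.
Proof.
by move=> /compact_bounded[M [_ AM]]; exists (M + 1) => x; apply: AM; rewrite ltrDl.
Qed.

Lemma similarity_normB_le (R : realType) (d : nat) (f : 'rV[R]_d -> 'rV[R]_d) x y :
  contracting_similarity f -> `|f x - f y| <= d%:R * `|x - y|.
Proof.
move=> [r [/andP[r0 r1] fr]]; apply: le_trans (normB_le_edist (f x) (f y)) _.
rewrite fr; apply: le_trans _ (edist_le_normB x y).
by rewrite ler_piMl ?(ltW r1) // /edist sqrtr_ge0.
Qed.

Section Separation.
Context {R : realType} {d : nat} {I : finType}.
Variables (phi : I -> 'rV[R]_d -> 'rV[R]_d) (F : set 'rV[R]_d).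
Hypothesis phi_sim : forall i, contracting_similarity (phi i).
Hypothesis F_compact : compact F.
Hypothesis phiF : forall i, phi i @` F `<=` F.

(* [p = (a, b)] stands for the hyperplane [dot a y = b], and [e] is a margin. *)
Definition separates (e : R) (p : 'rV[R]_d * R) : Prop :=
  exists i, forall x, F x -> e < `|dot p.1 (phi i x) - p.2|.

Lemma separatesW {e e' p} : e' <= e -> separates e p -> separates e' p.
Proof. by move=> e'e [i sep]; exists i => x Fx; apply: le_lt_trans e'e (sep x Fx). Qed.

Lemma separates_of_disjoint {a b i} :
  phi i @` F `&` [set y | dot a y = b] = set0 -> exists2 e, 0 < e & separates e (a, b).
Proof.
move=> disj; pose h x := dot a (phi i x).
have h_cont : continuous h.
  apply: (@lipschitz_continuous _ _ _ _ (d%:R * `|a| * d%:R)) => x y.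
  rewrite -dotBr -!mulrA; apply: le_trans (norm_dot_le _ _) _.
  by rewrite ler_wpM2l // ler_wpM2l // similarity_normB_le.
suff [e e0 sep] : exists2 e, 0 < e & forall x, F x -> e < `|h x - b|.
  by exists e; last exists i.
apply: compact_uniform_margin F_compact _ _ => [e e' x /andP[_ e'e]|x Fx].
  exact: le_lt_trans.
have hxb : 0 < `|h x - b|.
  rewrite normr_gt0 subr_eq0; apply/eqP => hx.
  have : (phi i @` F `&` [set y | dot a y = b]) (phi i x) by split => //; exists x.
  by rewrite disj.
exists (`|h x - b| / 2); first by rewrite divr_gt0.
near=> y.
have hxy : `|h x - h y| < `|h x - b| / 2.
  by near: y; apply: cvgr_dist_lt => //; [exact: h_cont | rewrite divr_gt0].
have := ler_distD (h y) (h x) b; lra.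
Unshelve. all: by end_near.
Qed.

Lemma separates_near {M e p} : (forall x, F x -> `|x| <= M) -> 0 < e ->
  separates e p -> \forall q \near p, separates (e / 2) q.
Proof.
move=> FM e0 [i sep]; pose C := d%:R * `|M| + 1.
have C0 : 0 < C by rewrite ltr_pwDr // mulr_ge0.
near=> q; exists i => x Fx; set y := phi i x.
have Fy : F y by apply: (phiF i); exists x.
have pq : `|p - q| * C < e / 2.
  by rewrite -ltr_pdivlMr //; near: q; apply: cvgr_dist_lt => //; rewrite !divr_gt0.
have [pq1 pq2] : `|p.1 - q.1| <= `|p - q| /\ `|p.2 - q.2| <= `|p - q|.
  by rewrite prod_normE !le_max !lexx orbT.
have shift : `|dot p.1 y - dot q.1 y - (p.2 - q.2)| <= C * `|p - q|.
  rewrite -dotBl; apply: le_trans (ler_normB _ _) _; rewrite mulrDl mul1r lerD //.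
  apply: le_trans (norm_dot_le _ _) _; rewrite -mulrA ler_wpM2l // mulrC.
  by apply: ler_pM => //; apply: le_trans (FM _ Fy) (ler_norm _).
have := lerB_dist (dot p.1 y - p.2) (dot p.1 y - dot q.1 y - (p.2 - q.2)).
have -> : dot p.1 y - p.2 - (dot p.1 y - dot q.1 y - (p.2 - q.2)) = dot q.1 y - q.2.
  by ring.
have := sep x Fx; lra.
Unshelve. all: by end_near.
Qed.

Lemma separates_uniform :
  (forall a b, a != 0 -> exists i, phi i @` F `&` [set y | dot a y = b] = set0) ->
  exists2 e, 0 < e & forall a b, `|a| = 1 -> separates e (a, b).
Proof.
move=> miss; have [M FM] := compact_normr_le F_compact.
have {}miss a b : `|a| = 1 -> exists i, phi i @` F `&` [set y | dot a y = b] = set0.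
  by move=> a1; apply: miss; rewrite -normr_eq0 a1 oner_neq0.
pose B := d%:R * `|M| + 1.
pose P := [set p : 'rV[R]_d * R | `|p.1| = 1 /\ `|p.2| <= B].
have P_compact : compact P.
  have -> : P = [set a : 'rV[R]_d | `|a| = 1] `*` `[-B, B].
    by apply/seteqP; split => -[a b]; rewrite /P /= in_itv /= ler_norml.
  apply: compact_setX; last exact: segment_compact.
  apply: bounded_closed_compact; first by exists 1; split => // r r1 a /= ->; exact: ltW.
  have -> : [set a : 'rV[R]_d | `|a| = 1] = Num.norm @^-1` [set 1] by [].
  by apply: (proj1 (continuous_closedP _)); [exact: norm_continuous | exact: closed_eq].
have [e0 e0_gt0 sepP] : exists2 e, 0 < e & forall p, P p -> separates e p.
  apply: compact_uniform_margin P_compact _ _ => [e e' p /andP[_ e'e]|[a b] [/= a1 _]].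
    exact: separatesW.
  have [i disj] := miss a b a1.
  have [e e0 sep] := separates_of_disjoint disj.
  exists (e / 2); first by rewrite divr_gt0.
  exact: separates_near FM e0 sep.
exists (Num.min e0 1) => [|a b a1]; first by rewrite lt_min e0_gt0 ltr01.
have [bB | Bb] := leP `|b| B.
  by apply: separatesW (sepP (a, b) (conj a1 bB)); rewrite ge_min lexx.
have [i _] := miss a b a1; exists i => x Fx.
have Fy : F (phi i x) by apply: (phiF i); exists x.
have : `|dot a (phi i x)| <= d%:R * `|M|.
  apply: le_trans (norm_dot_le _ _) _; rewrite a1 mul1r ler_wpM2l //.
  exact: le_trans (FM _ Fy) (ler_norm _).
have := lerB_dist b (dot a (phi i x)); rewrite distrC gt_min => ? ?.
by apply/orP; right; rewrite /B in Bb; lra.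
Qed.

Lemma diffuse_of_separates e : 0 < e ->
  (forall a b, `|a| = 1 -> separates e (a, b)) -> diffuse phi F (e / (d%:R + 1)).
Proof.
move=> e0 sep _ [a [b [a0 ->]]].
pose a' := `|a|^-1 *: a.
have a'1 : `|a'| = 1 by rewrite normrZ normfV normr_id mulVf ?normr_eq0.
have [i sepi] := sep a' (`|a|^-1 * b) a'1; exists i.
rewrite -subset0 => _ [[x Fx <-] [z /= az xz]].
have : `|dot a' (phi i x - z)| <= d%:R * edist (phi i x) z.
  apply: le_trans (norm_dot_le _ _) _.
  by rewrite a'1 mul1r ler_wpM2l // normB_le_edist.
have az' : dot a z = b := az.
rewrite dotBr [dot a' z]dotZl az'.
have : d%:R * edist (phi i x) z <= d%:R * (e / (d%:R + 1)) by rewrite ler_wpM2l // ltW.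
have : d%:R * (e / (d%:R + 1)) < e by rewrite mulrA ltr_pdivrMr ?ltr_pwDr //; lra.
have := sepi x Fx; lra.
Qed.
End Separation.

Lemma disjoint_of_diffuse (R : realType) (d : nat) (I : finType)
    (phi : I -> 'rV[R]_d -> 'rV[R]_d) (F : set 'rV[R]_d) c :
  0 < c -> diffuse phi F c ->
  forall L, affine_hyperplane L -> exists i, phi i @` F `&` L = set0.
Proof.
move=> c0 diff L hL; have [i disj] := diff L hL; exists i.
rewrite -subset0 => y [Fy Ly]; rewrite -disj; split => //.
by exists y; rewrite ?edistxx.
Qed.

Theorem proposition3p10 (R : realType) (d : nat) (I : finType)
  (phi : I -> 'rV[R]_d -> 'rV[R]_d) (F : set 'rV[R]_d) :
  (forall i, contracting_similarity (phi i)) ->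
  F !=set0 -> compact (F : set 'rV[R^o]_d) ->
  (forall i, phi i @` F `<=` F) ->
  ((exists c : R, 0 < c /\ diffuse phi F c) <->
   (forall L : set 'rV[R]_d, affine_hyperplane L ->
      exists i : I, (phi i @` F) `&` L = set0)).
Proof.
move=> phi_sim _ F_compact phiF; split=> [[c [c0 diff]]|miss].
  exact: disjoint_of_diffuse c0 diff.
have [e e0 sep] : exists2 e, 0 < e & forall a b, `|a| = 1 -> separates phi F e (a, b).
  by apply: separates_uniform => // a b a0; apply: miss; exists a, b.
exists (e / (d%:R + 1)); split; first by rewrite divr_gt0 ?ltr_pwDr.
exact: diffuse_of_separates.
Qed.
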